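(* Let $G=(V,E)$ be a connected, locally finite, undirected graph, let $s:V\to\mathbb{R}$, and let $\ell$ be a legal toppling procedure for $s$. Then: (i) for every $f\in\mathcal{F}_s$ we have $\ell_\infty\le f$ pointwise; (ii) if $u$ is any stabilizing toppling procedure for $s$, then $\ell_\infty\le u_\infty$; (iii) if $u$ is any legal stabilizing toppling procedure for $s$, then for all $x\in V$, $u_\infty(x)=\inf\{f(x): f\in\mathcal{F}_s\}$. In particular $u_\infty$ and the final configuration $s+\Delta u_\infty$ do not depend on the choice of legal stabilizing toppling procedure $u$.
   Context: $\Delta u(x)=\sum_{y\sim x}(u(y)-u(x))$ and $\mathcal{F}_s=\{f:V\to\mathbb{R}: f\ge 0,\ s+\Delta f\le 1\}$. A toppling procedure is given by a well-ordered closed set $T\subset[0,\infty)$ with $0\in T$ and a function $(t,x)\mapsto u_t(x)\in[0,\infty)$ on $T\times V$ such that for all $x$: $u_0(x)=0$; $u_{t_1}(x)\le u_{t_2}(x)$ for $t_1\le t_2$; and $t_n\uparrow t$ implies $u_{t_n}(x)\uparrow u_t(x)$. Set $s_t=s+\Delta u_t$ and $t^-=\sup\{r\in T: r<t\}$. The procedure is legal for $s$ if $u_t(x)-u_{t^-}(x)\le (s_{t^-}(x)-1)^+/\deg(x)$ for all $x\in V$ and $t\in T\setminus\{0\}$. It is finite if $u_\infty(x):=\lim_{t\to\sup T}u_t(x)<\infty$ for all $x$, and stabilizing for $s$ if it is finite and $s+\Delta u_\infty\le 1$. *)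

From Stdlib Require Import Reals List Relations.
Open Scope R_scope.

(* A locally finite graph on vertex type V is given by its neighbour lists:
   nbr x is the (finite) list of neighbours of x. *)
Definition simple_undirected_graph {V : Type} (nbr : V -> list V) : Prop :=
  (forall x, NoDup (nbr x)) /\
  (forall x y, In y (nbr x) -> In x (nbr y)) /\
  (forall x, ~ In x (nbr x)).

Definition connected {V : Type} (nbr : V -> list V) : Prop :=
  forall x y, clos_refl_trans V (fun a b => In b (nbr a)) x y.

Definition deg {V : Type} (nbr : V -> list V) (x : V) : R := INR (length (nbr x)).

Definition Lap {V : Type} (nbr : V -> list V) (u : V -> R) (x : V) : R :=
  fold_right (fun y acc => (u y - u x) + acc) 0 (nbr x).

Definition in_Fs {V : Type} (nbr : V -> list V) (s f : V -> R) : Prop :=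
  forall x, 0 <= f x /\ s x + Lap nbr f x <= 1.

Definition time_set (T : R -> Prop) : Prop :=
  T 0 /\
  (forall t, T t -> 0 <= t) /\
  (forall t, (forall e, 0 < e -> exists r, T r /\ Rabs (r - t) < e) -> T t) /\
  (forall A : R -> Prop, (forall t, A t -> T t) -> (exists t, A t) ->
     exists m, A m /\ forall t, A t -> m <= t).

Definition toppling_procedure {V : Type} (T : R -> Prop) (u : R -> V -> R) : Prop :=
  time_set T /\
  (forall t x, T t -> 0 <= u t x) /\
  (forall x, u 0 x = 0) /\
  (forall t1 t2 x, T t1 -> T t2 -> t1 <= t2 -> u t1 x <= u t2 x) /\
  (forall (tn : nat -> R) t x, (forall n, T (tn n)) -> T t ->
     (forall n, tn n <= tn (S n)) -> Un_cv tn t ->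
     Un_cv (fun n => u (tn n) x) (u t x)).

Definition is_tminus (T : R -> Prop) (t tm : R) : Prop :=
  is_lub (fun r => T r /\ r < t) tm.

Definition legal {V : Type} (nbr : V -> list V) (s : V -> R)
    (T : R -> Prop) (u : R -> V -> R) : Prop :=
  forall t tm x, T t -> t <> 0 -> is_tminus T t tm ->
    u t x - u tm x <= Rmax 0 (s x + Lap nbr (u tm) x - 1) / deg nbr x.

Definition lim_along (T : R -> Prop) (g : R -> R) (l : R) : Prop :=
  forall e, 0 < e -> exists r, T r /\
    forall t, T t -> r <= t -> Rabs (g t - l) < e.

Definition final_odometer {V : Type} (T : R -> Prop) (u : R -> V -> R)
    (uinf : V -> R) : Prop :=
  forall x, lim_along T (fun t => u t x) (uinf x).

Definition finite_procedure {V : Type} (T : R -> Prop) (u : R -> V -> R) : Prop :=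
  forall x, exists l, lim_along T (fun t => u t x) l.

Definition stabilizing {V : Type} (nbr : V -> list V) (s : V -> R)
    (T : R -> Prop) (u : R -> V -> R) : Prop :=
  finite_procedure T u /\
  forall uinf, final_odometer T u uinf -> forall x, s x + Lap nbr uinf x <= 1.

Definition is_inf (A : R -> Prop) (m : R) : Prop :=
  (forall a, A a -> m <= a) /\ (forall b, (forall a, A a -> b <= a) -> b <= m).

(* A legal procedure never overshoots any f in F_s.  Take the first time m at
   which some u_m(x) > f(x).  If m has an immediate predecessor t^- < m, then
   u_{t^-} <= f everywhere, so s + Delta u_{t^-} <= 1 + deg x (f x - u_{t^-} x)
   and legality caps the increment at f x - u_{t^-} x.  If instead m is a limit
   of earlier times, left continuity of the procedure gives u_m <= f.  Hence
   u_oo <= f for every f in F_s, while the final odometer of a stabilizing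
   procedure itself lies in F_s; (i)-(iii) follow. *)

From Stdlib Require Import Reals List Relations.
From Stdlib Require Import Lra Lia Classical ClassicalEpsilon FunctionalExtensionality.
Open Scope R_scope.

(* Includes d = 0 (isolated vertices), where Rocq's division gives a / 0 = 0. *)
Lemma Rdiv_le_of_le_mul (a d c : R) :
  0 <= d -> 0 <= c -> a <= d * c -> a / d <= c.
Proof.
  intros Hd Hc Ha. destruct (Req_dec d 0) as [-> | Hd0].
  - unfold Rdiv. rewrite Rinv_0, Rmult_0_r. exact Hc.
  - apply (Rmult_le_reg_l d); [lra |].
    unfold Rdiv. rewrite (Rmult_comm a), <- Rmult_assoc, Rinv_r, Rmult_1_l; lra.
Qed.

Lemma is_lub_approx (A : R -> Prop) (m e : R) :
  is_lub A m -> 0 < e -> exists r, A r /\ m - e < r.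
Proof.
  intros [_ Hleast] He. apply NNPP. intros Hn.
  enough (m <= m - e) by lra.
  apply Hleast. intros r Ar. apply Rnot_lt_le. intros Hr. apply Hn. eauto.
Qed.

Lemma Un_cv_le_ub (h : nat -> R) (L B : R) :
  Un_cv h L -> (forall n, h n <= B) -> L <= B.
Proof.
  intros Hcv HB. apply Rnot_lt_le. intros HBL.
  destruct (Hcv (L - B)) as [N HN]; [lra |].
  specialize (HN N (le_n N)). specialize (HB N). unfold Rdist in HN.
  split_Rabs; lra.
Qed.

Fixpoint running_max (g : nat -> R) (n : nat) : R :=
  match n with O => g O | S k => Rmax (running_max g k) (g (S k)) end.

Lemma running_max_in (A : R -> Prop) (g : nat -> R) :
  (forall n, A (g n)) -> forall n, A (running_max g n).
Proof. intros H n. induction n; simpl; [auto | apply Rmax_case; auto]. Qed.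

Lemma running_max_ge (g : nat -> R) (n : nat) : g n <= running_max g n.
Proof. destruct n; simpl; [lra | apply Rmax_r]. Qed.

Lemma running_max_incr (g : nat -> R) (n : nat) :
  running_max g n <= running_max g (S n).
Proof. apply Rmax_l. Qed.

Lemma is_lub_increasing_seq (A : R -> Prop) (m : R) :
  is_lub A m -> exists h : nat -> R,
    (forall n, A (h n)) /\ (forall n, h n <= h (S n)) /\ Un_cv h m.
Proof.
  intros Hm.
  assert (Hg : forall n : nat, { r | A r /\ m - / (INR n + 1) < r }).
  { intros n. apply constructive_indefinite_description, is_lub_approx; [exact Hm |].
    apply Rinv_0_lt_compat. generalize (pos_INR n). lra. }
  set (g n := proj1_sig (Hg n)).
  assert (HgA : forall n, A (g n)) by (intros n; exact (proj1 (proj2_sig (Hg n)))).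
  assert (Hgm : forall n, m - / (INR n + 1) < g n)
    by (intros n; exact (proj2 (proj2_sig (Hg n)))).
  assert (HhA := running_max_in A g HgA).
  exists (running_max g). split; [exact HhA |]. split; [apply running_max_incr |].
  intros eps Heps. destruct (archimed_cor1 eps Heps) as [N [HN HN0]].
  exists N. intros n Hn. unfold Rdist.
  assert (Hhm : running_max g n <= m) by (apply (proj1 Hm), HhA).
  assert (Hinv : / (INR n + 1) <= / INR N).
  { apply Rinv_le_contravar; [apply lt_0_INR; lia |].
    apply le_INR in Hn. lra. }
  specialize (Hgm n). generalize (running_max_ge g n). intros.
  split_Rabs; lra.
Qed.

Lemma lim_along_le_ub (T : R -> Prop) (g : R -> R) (L B : R) :
  lim_along T g L -> (forall t, T t -> g t <= B) -> L <= B.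
Proof.
  intros HL HB. apply Rnot_lt_le. intros HBL.
  destruct (HL (L - B)) as (r & Tr & Hr); [lra |].
  specialize (Hr r Tr (Rle_refl _)). specialize (HB r Tr). split_Rabs; lra.
Qed.

Lemma lim_along_ge_lb (T : R -> Prop) (g : R -> R) (L B : R) :
  lim_along T g L -> (forall t, T t -> B <= g t) -> B <= L.
Proof.
  intros HL HB. apply Rnot_lt_le. intros HLB.
  destruct (HL (B - L)) as (r & Tr & Hr); [lra |].
  specialize (Hr r Tr (Rle_refl _)). specialize (HB r Tr). split_Rabs; lra.
Qed.

Lemma lim_along_unique (T : R -> Prop) (g : R -> R) (a b : R) :
  lim_along T g a -> lim_along T g b -> a = b.
Proof.
  intros Ha Hb. apply Rle_antisym.
  - apply Rnot_lt_le. intros Hba.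
    destruct (Ha ((a - b) / 2)) as (r1 & T1 & H1); [lra |].
    destruct (Hb ((a - b) / 2)) as (r2 & T2 & H2); [lra |].
    assert (Tr : T (Rmax r1 r2)) by (apply Rmax_case; auto).
    specialize (H1 _ Tr (Rmax_l _ _)). specialize (H2 _ Tr (Rmax_r _ _)).
    split_Rabs; lra.
  - apply Rnot_lt_le. intros Hab.
    destruct (Ha ((b - a) / 2)) as (r1 & T1 & H1); [lra |].
    destruct (Hb ((b - a) / 2)) as (r2 & T2 & H2); [lra |].
    assert (Tr : T (Rmax r1 r2)) by (apply Rmax_case; auto).
    specialize (H1 _ Tr (Rmax_l _ _)). specialize (H2 _ Tr (Rmax_r _ _)).
    split_Rabs; lra.
Qed.

Section TimeSet.
Variable T : R -> Prop.
Hypothesis HT : time_set T.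

Lemma time_set_ind (P : R -> Prop) :
  (forall m, T m -> (forall r, T r -> r < m -> P r) -> P m) ->
  forall t, T t -> P t.
Proof.
  destruct HT as (_ & _ & _ & Hwo). intros Hstep t Tt.
  apply NNPP. intros HPt.
  destruct (Hwo (fun r => T r /\ ~ P r)) as (m & [Tm HPm] & Hmin);
    [tauto | eauto |].
  apply HPm, Hstep; [exact Tm |]. intros r Tr Hrm. apply NNPP. intros HPr.
  specialize (Hmin r (conj Tr HPr)). lra.
Qed.

Lemma time_set_tminus (m : R) :
  T m -> m <> 0 -> exists tm, is_tminus T m tm /\ T tm /\ tm <= m.
Proof.
  destruct HT as (T0 & Tpos & Tclosed & _). intros Tm Hm0.
  assert (Hmpos : 0 < m) by (specialize (Tpos m Tm); lra).
  destruct (completeness (fun r => T r /\ r < m)) as [tm Htm].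
  - exists m. intros r [_ Hr]. lra.
  - exists 0. auto.
  - exists tm. split; [exact Htm |]. split.
    + apply Tclosed. intros e He.
      destruct (is_lub_approx _ _ _ Htm He) as (r & [Tr Hr] & Hre).
      exists r. split; [exact Tr |].
      assert (r <= tm) by (apply (proj1 Htm); auto). split_Rabs; lra.
    + apply (proj2 Htm). intros r [_ Hr]. lra.
Qed.

Lemma lim_along_monotone (g : R -> R) (B : R) :
  (forall t1 t2, T t1 -> T t2 -> t1 <= t2 -> g t1 <= g t2) ->
  (forall t, T t -> g t <= B) ->
  exists L, lim_along T g L /\ L <= B.
Proof.
  destruct HT as (T0 & _). intros Hmono HB.
  destruct (completeness (fun v => exists t, T t /\ v = g t)) as [L HL].
  - exists B. intros v (t & Tt & ->). auto.
  - eauto.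
  - exists L. split.
    + intros e He.
      destruct (is_lub_approx _ _ _ HL He) as (v & (r & Tr & ->) & Hr).
      exists r. split; [exact Tr |]. intros t Tt Hrt.
      assert (g r <= g t) by auto.
      assert (g t <= L) by (apply (proj1 HL); eauto).
      split_Rabs; lra.
    + apply (proj2 HL). intros v (t & Tt & ->). auto.
Qed.

End TimeSet.

Section Odometer.
Variables (V : Type) (nbr : V -> list V) (s : V -> R).

Lemma Lap_le_of_le (g f : V -> R) (x : V) :
  (forall y, g y <= f y) -> Lap nbr g x <= Lap nbr f x + deg nbr x * (f x - g x).
Proof.
  intros H. unfold Lap, deg. induction (nbr x) as [| a ys IH].
  - simpl. lra.
  - cbn [fold_right length]. rewrite S_INR. specialize (H a). lra.
Qed.

Lemma legal_step_le (f g : V -> R) (x : V) (v : R) :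
  in_Fs nbr s f -> (forall y, g y <= f y) ->
  v - g x <= Rmax 0 (s x + Lap nbr g x - 1) / deg nbr x -> v <= f x.
Proof.
  intros Hf Hgf Hv.
  enough (Rmax 0 (s x + Lap nbr g x - 1) / deg nbr x <= f x - g x) by lra.
  assert (Hdeg : 0 <= deg nbr x) by apply pos_INR.
  assert (Hlap := Lap_le_of_le g f x Hgf).
  specialize (Hgf x). destruct (Hf x) as [_ Hfx].
  apply Rdiv_le_of_le_mul; [exact Hdeg | lra |].
  apply Rmax_lub; [apply Rmult_le_pos |]; lra.
Qed.

Lemma legal_le_Fs (T : R -> Prop) (u : R -> V -> R) (f : V -> R) :
  toppling_procedure T u -> legal nbr s T u -> in_Fs nbr s f ->
  forall t x, T t -> u t x <= f x.
Proof.
  intros (HT & _ & Hu0 & _ & Hcont) Hlegal Hf t x Tt. revert x.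
  apply (time_set_ind T HT (fun t => forall x, u t x <= f x)); [| exact Tt].
  intros m Tm IH x.
  destruct (Req_dec m 0) as [-> | Hm0].
  { rewrite Hu0. apply (Hf x). }
  destruct (time_set_tminus T HT m Tm Hm0) as (tm & Htm & Ttm & Htm_le).
  destruct (Rle_lt_or_eq_dec tm m Htm_le) as [Hlt | ->].
  - apply (legal_step_le f (u tm)); [exact Hf | now apply IH |].
    apply Hlegal; assumption.
  - destruct (is_lub_increasing_seq _ m Htm) as (h & Hh & Hincr & Hcv).
    apply (Un_cv_le_ub (fun n => u (h n) x)).
    + apply Hcont; [intros n; apply Hh | exact Tm | exact Hincr | exact Hcv].
    + intros n. apply IH; apply Hh.
Qed.

Lemma legal_lim_le_Fs (T : R -> Prop) (u : R -> V -> R) (f : V -> R) (x : V) :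
  toppling_procedure T u -> legal nbr s T u -> in_Fs nbr s f ->
  exists L, lim_along T (fun t => u t x) L /\ L <= f x.
Proof.
  intros Hu Hlegal Hf. pose proof Hu as (HT & _ & _ & Hmono & _).
  apply (lim_along_monotone T HT); [now intros; apply Hmono |].
  intros t Tt. now apply (legal_le_Fs T u f).
Qed.

Lemma stabilizing_final_odometer (T : R -> Prop) (u : R -> V -> R) :
  toppling_procedure T u -> stabilizing nbr s T u ->
  exists uinf, final_odometer T u uinf /\ in_Fs nbr s uinf.
Proof.
  intros (HT & Hnn & _) [Hfin Hstab].
  set (uinf x := proj1_sig (constructive_indefinite_description _ (Hfin x))).
  assert (Huinf : final_odometer T u uinf)
    by (intros x; exact (proj2_sig (constructive_indefinite_description _ (Hfin x)))).
  exists uinf. split; [exact Huinf |]. intros x. split; [| now apply Hstab].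
  apply (lim_along_ge_lb T _ _ _ (Huinf x)). intros t Tt. now apply Hnn.
Qed.

Lemma legal_stabilizing_is_inf (T : R -> Prop) (u : R -> V -> R) (x : V) (U : R) :
  toppling_procedure T u -> legal nbr s T u -> stabilizing nbr s T u ->
  lim_along T (fun t => u t x) U ->
  is_inf (fun a => exists f, in_Fs nbr s f /\ a = f x) U.
Proof.
  intros Hu Hlegal Hstab HU. pose proof Hu as (HT & _).
  split.
  - intros a (f & Hf & ->). apply (lim_along_le_ub T _ _ _ HU).
    intros t Tt. now apply (legal_le_Fs T u f).
  - intros b Hb. destruct (stabilizing_final_odometer T u Hu Hstab) as (uinf & Huinf & HF).
    rewrite (lim_along_unique T _ _ _ HU (Huinf x)). apply Hb. eauto.
Qed.

End Odometer.

Theorem proposition2p5 (V : Type) (nbr : V -> list V)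
  (Hg : simple_undirected_graph nbr) (Hc : connected nbr)
  (s : V -> R) (T : R -> Prop) (l : R -> V -> R)
  (Hl : toppling_procedure T l) (Hlegal : legal nbr s T l) :
  (* (i) *)
  (forall f, in_Fs nbr s f ->
     forall x, exists L, lim_along T (fun t => l t x) L /\ L <= f x) /\
  (* (ii) *)
  (forall (T' : R -> Prop) (u : R -> V -> R),
     toppling_procedure T' u -> stabilizing nbr s T' u ->
     forall x, exists L, lim_along T (fun t => l t x) L /\
       forall U, lim_along T' (fun t => u t x) U -> L <= U) /\
  (* (iii) *)
  (forall (T' : R -> Prop) (u : R -> V -> R),
     toppling_procedure T' u -> legal nbr s T' u -> stabilizing nbr s T' u ->
     forall x U, lim_along T' (fun t => u t x) U ->
       is_inf (fun a => exists f, in_Fs nbr s f /\ a = f x) U) /\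
  (* in particular: independence of the legal stabilizing procedure *)
  (forall (T1 : R -> Prop) (u1 : R -> V -> R) (T2 : R -> Prop) (u2 : R -> V -> R)
          (u1inf u2inf : V -> R),
     toppling_procedure T1 u1 -> legal nbr s T1 u1 -> stabilizing nbr s T1 u1 ->
     toppling_procedure T2 u2 -> legal nbr s T2 u2 -> stabilizing nbr s T2 u2 ->
     final_odometer T1 u1 u1inf -> final_odometer T2 u2 u2inf ->
     (forall x, u1inf x = u2inf x) /\
     (forall x, s x + Lap nbr u1inf x = s x + Lap nbr u2inf x)).
Proof.
  split; [| split; [| split]].
  - intros f Hf x. now apply (legal_lim_le_Fs V nbr s T l f).
  - intros T' u Hu Hstab x.
    destruct (stabilizing_final_odometer V nbr s T' u Hu Hstab) as (uinf & Huinf & HF).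
    destruct (legal_lim_le_Fs V nbr s T l uinf x Hl Hlegal HF) as (L & HL & HLe).
    exists L. split; [exact HL |]. intros U HU.
    now rewrite (lim_along_unique T' _ _ _ HU (Huinf x)).
  - intros T' u Hu Hlegal' Hstab x U HU. now apply (legal_stabilizing_is_inf _ _ _ T' u).
  - intros T1 u1 T2 u2 u1inf u2inf Hu1 Hl1 Hs1 Hu2 Hl2 Hs2 Hf1 Hf2.
    assert (Heq : forall x, u1inf x = u2inf x).
    { intros x.
      destruct (legal_stabilizing_is_inf _ _ _ T1 u1 x _ Hu1 Hl1 Hs1 (Hf1 x)) as [Lb1 Gr1].
      destruct (legal_stabilizing_is_inf _ _ _ T2 u2 x _ Hu2 Hl2 Hs2 (Hf2 x)) as [Lb2 Gr2].
      apply Rle_antisym; [apply Gr2 | apply Gr1]; assumption. }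
    split; [exact Heq |]. intros x.
    now rewrite (functional_extensionality _ _ Heq).
Qed.
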